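(* Let $V$ be a vertex algebra, $M_1,M_2,M_3$ be $V$-modules and $\mathcal Y:M_1\to\mathrm{Hom}(M_2,M_3[[z]]z^{-S})$, $a\mapsto\mathcal Y(a,z)=\sum_{n\in\mathbb C}a_{(n)}z^{-n-1}$, a linear map satisfying $T\mathcal Y(a,z)-\mathcal Y(a,z)T=\mathcal Y(Ta,z)=\partial_z\mathcal Y(a,z)$. Then $\mathcal Y$ satisfies the Jacobi identity $$\iota_{z_1,z_2}(z_1-z_2)^{n}Y(v,z_1)\mathcal{Y}(a,z_2)-\iota_{z_2,z_1}(z_1-z_2)^{n}\mathcal{Y}(a,z_2)Y(v,z_1)=\sum_{i\ge0}\mathcal Y(v_{(n+i)}a,z_2)\,\partial^{(i)}_{z_2}\delta(z_1,z_2)$$ for all $v\in V$, $a\in M_1$ and $n\in\mathbb Z$ if and only if for all $v\in V$, $a\in M_1$, $b\in M_2$ the following two identities hold: $$\mathcal Y(v_{(-1)}a,z)b=Y_+(v,z)\mathcal Y(a,z)b+\mathcal Y(a,z)Y_-(v,z)b,$$ $$Y(v,z_1)\mathcal Y(a,z_2)b-\mathcal Y(a,z_2)Y(v,z_1)b=\sum_{i\ge0}\mathcal Y(v_{(i)}a,z_2)b\,\partial^{(i)}_{z_2}\delta(z_1,z_2).$$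
   Context: $V$ is a vertex algebra with fields $Y(v,z)=\sum_{n\in\mathbb Z}v_{(n)}z^{-n-1}$. A $V$-module is a vector space $M$ with $T\in\mathrm{End}(M)$ and fields $Y^M(v,z)=\sum_{n\in\mathbb Z}v_{(n)}z^{-n-1}\in\mathrm{Hom}(M,M((z)))$ with $Y^M(\mathbf1,z)=\mathrm{id}$, $[T,Y^M(v,z)]=\partial_zY^M(v,z)$ and the Jacobi identity above (with $\mathcal Y$ replaced by $Y^M$); on modules $Y(v,z)$ denotes $Y^M(v,z)$. $S\subset\mathbb C$ satisfies $S+\mathbb Z=S$, $S/\mathbb Z$ finite, and $U[[z]]z^{-S}$ denotes formal sums $\sum_nf_nz^n$ with $n$ in a finite union of sets $-d+\mathbb Z_{\ge0}$, $d\in S$. $\iota_{z_1,z_2}$ denotes expansion in nonnegative powers of $z_2$ (domain $|z_1|>|z_2|$), $\delta(z_1,z_2)=\sum_{n\in\mathbb Z}z_1^nz_2^{-n-1}$, $\partial^{(i)}_{z}=\partial_z^i/i!$, $Y_+(v,z):=\sum_{n<0}v_{(n)}z^{-n-1}$ and $Y_-(v,z):=\sum_{n\ge0}v_{(n)}z^{-n-1}$. *)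

From mathcomp Require Import all_boot all_algebra.
From mathcomp Require Import reals complex.
Set Implicit Arguments. Unset Strict Implicit. Unset Printing Implicit Defensive.
Import GRing.Theory Num.Theory.
Local Open Scope ring_scope.

Section Defs.
Variable K : fieldType.

Definition gbin (n : int) (j : nat) : K :=
  (\prod_(i < j) (n%:~R - (i : nat)%:R)) / (j`!)%:R.

Definition series_sum {U : lmodType K} (f : nat -> U) (s : U) : Prop :=
  exists N0 : nat, forall N : nat, (N0 <= N)%N -> \sum_(j < N) f j = s.

Definition lin {U W : lmodType K} (f : U -> W) : Prop :=
  forall (c : K) (x y : U), f (c *: x + y) = c *: f x + f y.

(* mode maps  mu u n w = u_(n) w ;  bilinear in (u, w) *)
Definition bilin_modes {E : Type} {U W X : lmodType K} (mu : U -> E -> W -> X) : Prop :=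
  (forall n w, lin (fun u => mu u n w)) /\ (forall u n, lin (mu u n)).

(* Y(u,z)w in W((z)) : u_(n) w = 0 for n >> 0 *)
Definition truncation {U W X : lmodType K} (mu : U -> int -> W -> X) : Prop :=
  forall u w, exists N : int, forall n : int, N <= n -> mu u n w = 0.

(* Jacobi identity, written coefficientwise: for all v, a, b, n in Z, and all
   exponents m in Z (for z1) and p in E (for z2), the coefficient of
   z1^{-m-1} z2^{-p-1} in
     iota_{z1,z2}(z1-z2)^n Y(v,z1) Yc(a,z2) b - iota_{z2,z1}(z1-z2)^n Yc(a,z2) Y(v,z1) b
   equals that of   sum_{i>=0} Yc(v_(n+i) a, z2) b  d^{(i)}_{z2} delta(z1,z2). *)
Definition jacobi {E : zmodType} (ie : int -> E) {M1 M2 M3 : lmodType K} {V : lmodType K}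
    (m1 : V -> int -> M1 -> M1) (m2 : V -> int -> M2 -> M2) (m3 : V -> int -> M3 -> M3)
    (Yc : M1 -> E -> M2 -> M3) : Prop :=
  forall (v : V) (a : M1) (b : M2) (n m : int) (p : E),
    exists s1 s2 s3,
      series_sum (fun j => ((-1) ^+ j * gbin n j) *: m3 v (m + n - j%:Z) (Yc a (p + ie j%:Z) b)) s1
   /\ series_sum (fun j => ((-1) ^ (n + j%:Z) * gbin n j) *: Yc a (p + ie (n - j%:Z)) (m2 v (m + j%:Z) b)) s2
   /\ series_sum (fun i => gbin m i *: Yc (m1 v (n + i%:Z) a) (p + ie (m - i%:Z)) b) s3
   /\ s1 - s2 = s3.

Definition is_vertex_algebra {V : lmodType K} (vac : V) (T : V -> V) (md : V -> int -> V -> V) : Prop :=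
  lin T /\ bilin_modes md /\ truncation md /\
      (forall n w, md vac n w = if n == (-1)%R then w else 0) /\
      (* Y(v,z) 1 in V[[z]] and Y(v,z)1|_{z=0} = v, T 1 = 0 *)
      (forall v n, 0 <= n -> md v n vac = 0) /\ (forall v, md v (-1) vac = v) /\ T vac = 0 /\
      (* [T, Y(v,z)] = d/dz Y(v,z) *)
      (forall v n w, T (md v n w) - md v n (T w) = - n%:~R *: md v (n - 1) w) /\
      jacobi id md md md md.

Definition is_module {V : lmodType K} (vac : V) (md : V -> int -> V -> V)
    {M : lmodType K} (TM : M -> M) (mm : V -> int -> M -> M) : Prop :=
  lin TM /\ bilin_modes mm /\ truncation mm /\
      (forall n w, mm vac n w = if n == (-1)%R then w else 0) /\
      (forall v n w, TM (mm v n w) - mm v n (TM w) = - n%:~R *: mm v (n - 1) w) /\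
      jacobi id md mm mm mm.

Definition exponent_set (S : K -> Prop) : Prop :=
  (forall (s : K) (k : int), S s <-> S (s + k%:~R)) /\
  (exists ds : seq K, forall s, S s -> exists (d : K) (k : int), d \in ds /\ s = d + k%:~R).

(* f = sum_n f(n) z^{-n-1} lies in X[[z]] z^{-S}: the exponents -n-1 with
   f(n) <> 0 lie in a finite union of sets -d + Z_{>=0}, d in S. *)
Definition in_series_S {X : lmodType K} (S : K -> Prop) (f : K -> X) : Prop :=
  exists ds : seq K, (forall d, d \in ds -> S d) /\
    forall n : K, f n <> 0 -> exists d : K, exists k : nat, d \in ds /\ - n - 1 = - d + k%:R.

End Defs.

From mathcomp Require Import all_boot all_algebra.
From mathcomp Require Import reals complex.
From mathcomp Require Import ring zify.
From Stdlib Require Import Classical ClassicalEpsilon FunctionalExtensionality.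
Import GRing.Theory Num.Theory.
Local Open Scope ring_scope.
Set Implicit Arguments. Unset Strict Implicit. Unset Printing Implicit Defensive.

(* Write D(a; n, m, p) for the difference between the two sides of the Jacobi identity at the
   coefficient of z1^(-m-1) z2^(-p-1).  Multiplying by z1 - z2 gives
   D(n+1, m, p) = D(n, m+1, p) - D(n, m, p+1), and translation covariance of Y and of the
   intertwining operator gives n D(n-1, m, p) = p D(n, m, p-1) + D(Ta; n, m, p).  The
   commutator formula says exactly D(0, -, -) = 0 and the (-1)-product formula says
   D(-1, 0, -) = 0.  The first recursion then propagates vanishing to all n >= 0 and to
   n = -1, and the second, divided by n != 0, to all n <= -2. *)

Definition eventually_zero {U : zmodType} (f : nat -> U) :=
  exists N, forall j, (N <= j)%N -> f j = 0.

(* Junk value when [f] is not eventually zero. *)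
Definition esum {U : zmodType} (f : nat -> U) : U :=
  \sum_(j < epsilon (inhabits 0%N) (fun N => forall j, (N <= j)%N -> f j = 0)) f j.

Section EventuallyZero.
Variable U : zmodType.
Implicit Types f g : nat -> U.

Lemma big_ord_tail0 f N M : (forall j, (N <= j)%N -> f j = 0) -> (N <= M)%N ->
  \sum_(j < M) f j = \sum_(j < N) f j.
Proof.
move=> fN /subnKC <-; elim: (M - N)%N => [|d IHd]; first by rewrite addn0.
by rewrite addnS big_ord_recr /= IHd fN ?addr0 // leq_addr.
Qed.

Lemma esumE f N : (forall j, (N <= j)%N -> f j = 0) -> esum f = \sum_(j < N) f j.
Proof.
move=> fN; rewrite /esum; set E := epsilon _ _.
have fE : forall j, (E <= j)%N -> f j = 0 :=
  epsilon_spec (inhabits 0%N) (fun N => forall j, (N <= j)%N -> f j = 0) (ex_intro _ N fN).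
by rewrite -(big_ord_tail0 fE (leq_maxl E N)) (big_ord_tail0 fN (leq_maxr E N)).
Qed.

Lemma eventually_zeroW (X : zmodType) (h : nat -> X) f :
  eventually_zero h -> (forall j, h j = 0 -> f j = 0) -> eventually_zero f.
Proof. by move=> [N hN] hf; exists N => j /hN /hf. Qed.

Lemma eventually_zeroS f : eventually_zero f -> eventually_zero (fun j => f j.+1).
Proof. by move=> [N fN]; exists N => j jN; apply/fN/leqW. Qed.

Lemma eq_esum f g : (forall j, f j = g j) -> esum f = esum g.
Proof. by move=> fg; rewrite (functional_extensionality _ _ fg). Qed.

Lemma esumD f g : eventually_zero f -> eventually_zero g ->
  esum (fun j => f j + g j) = esum f + esum g.
Proof.
move=> [N fN] [M gM].
have fNM j : (maxn N M <= j)%N -> f j = 0 by rewrite geq_max => /andP[/fN].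
have gNM j : (maxn N M <= j)%N -> g j = 0 by rewrite geq_max => /andP[_ /gM].
have fgNM j : (maxn N M <= j)%N -> f j + g j = 0 by move=> jNM; rewrite fNM ?gNM ?addr0.
by rewrite (esumE fNM) (esumE gNM) (esumE fgNM) big_split.
Qed.

Lemma esumN f : eventually_zero f -> esum (fun j => - f j) = - esum f.
Proof.
move=> [N fN]; have fNN j : (N <= j)%N -> - f j = 0 by move=> /fN ->; rewrite oppr0.
by rewrite (esumE fN) (esumE fNN) sumrN.
Qed.

Lemma esumB f g : eventually_zero f -> eventually_zero g ->
  esum (fun j => f j - g j) = esum f - esum g.
Proof.
move=> ef eg; rewrite esumD ?esumN //.
by apply: (eventually_zeroW eg) => j ->; rewrite oppr0.
Qed.

Lemma esum_recl f : eventually_zero f -> esum f = f 0%N + esum (fun j => f j.+1).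
Proof.
move=> [N fN]; have fSN j : (N <= j)%N -> f j.+1 = 0 by move=> /leqW /fN.
have fNS j : (N.+1 <= j)%N -> f j = 0 by move=> /ltnW /fN.
by rewrite (esumE fNS) (esumE fSN) big_ord_recl.
Qed.

Lemma esum_first f : (forall j, f j.+1 = 0) -> esum f = f 0%N.
Proof. by move=> fS; rewrite (@esumE _ 1%N) ?big_ord1 // => -[|j] // _; apply: fS. Qed.

End EventuallyZero.

Section EventuallyZeroLmod.
Variables (K : fieldType) (U : lmodType K).
Implicit Types f : nat -> U.

Lemma eventually_zeroZ (c : nat -> K) f :
  eventually_zero f -> eventually_zero (fun j => c j *: f j).
Proof. by move=> ef; apply: (eventually_zeroW ef) => j ->; rewrite scaler0. Qed.

Lemma esumZ (c : K) f : eventually_zero f -> esum (fun j => c *: f j) = c *: esum f.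
Proof.
move=> [N fN]; have cfN j : (N <= j)%N -> c *: f j = 0 by move=> /fN ->; rewrite scaler0.
by rewrite (esumE fN) (esumE cfN) scaler_sumr.
Qed.

Lemma esumDZ (c : K) f g : eventually_zero f -> eventually_zero g ->
  c *: esum f + esum g = esum (fun j => c *: f j + g j).
Proof.
move=> ef eg; have ecf := eventually_zeroZ (fun=> c) ef.
by rewrite esumD // esumZ.
Qed.

Lemma series_sum_esum f s : eventually_zero f -> series_sum f s <-> s = esum f.
Proof.
move=> [N fN]; rewrite (esumE fN); split => [[N0 sN0] | ->].
  by rewrite -(sN0 (maxn N0 N) (leq_maxl _ _)) (big_ord_tail0 fN (leq_maxr _ _)).
by exists N => M NM; rewrite (big_ord_tail0 fN NM).
Qed.

End EventuallyZeroLmod.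

Section GeneralizedBinomial.
Variable K : numFieldType.
Local Notation gbin := (gbin K).

Definition falling (n : int) (j : nat) : K := \prod_(i < j) (n%:~R - i%:R).

Lemma gbinE n j : gbin n j = falling n j / j`!%:R.
Proof. by []. Qed.

Lemma natr_fact_neq0 j : j`!%:R != 0 :> K.
Proof. by rewrite pnatr_eq0 -lt0n fact_gt0. Qed.

Lemma gbinSE n j : gbin n j.+1 = falling n j.+1 / (j.+1%:R * j`!%:R).
Proof. by rewrite gbinE factS natrM. Qed.

Lemma gbin0 n : gbin n 0 = 1.
Proof. by rewrite gbinE /falling big_ord0 fact0 divr1. Qed.

Lemma gbin_absorb n j : j.+1%:R * gbin n j.+1 = n%:~R * gbin (n - 1) j.
Proof.
have fallingSl : falling n j.+1 = n%:~R * falling (n - 1) j.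
  rewrite /falling big_ord_recl /= subr0; congr (_ * _); apply: eq_bigr => i _.
  by rewrite /bump /= add1n intrB mulrSr; ring.
have h1 := natr_fact_neq0 j; have h2 : j.+1%:R != 0 :> K by rewrite pnatr_eq0.
by rewrite gbinSE gbinE fallingSl; field; rewrite h1 nat1r h2.
Qed.

Lemma gbin_succ m i : (m%:~R - i%:R) * gbin m i = i.+1%:R * gbin m i.+1.
Proof.
have h1 := natr_fact_neq0 i; have h2 : i.+1%:R != 0 :> K by rewrite pnatr_eq0.
by rewrite gbinSE gbinE /falling big_ord_recr /=; field; rewrite h1 nat1r h2.
Qed.

Lemma gbin_subn n j : (n%:~R - j%:R) * gbin n j = n%:~R * gbin (n - 1) j.
Proof. by rewrite gbin_succ gbin_absorb. Qed.

Lemma gbin_pascal n j : gbin (n + 1) j.+1 = gbin n j.+1 + gbin n j.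
Proof.
apply: (@mulfI _ j.+1%:R); first by rewrite pnatr_eq0.
by rewrite gbin_absorb addrK mulrDr -gbin_succ intrD mulrS; ring.
Qed.

Lemma gbin_0S j : gbin 0 j.+1 = 0.
Proof.
apply: (@mulfI _ j.+1%:R); first by rewrite pnatr_eq0.
by rewrite gbin_absorb mul0r mulr0.
Qed.

Lemma gbinN1 j : gbin (-1) j = (-1) ^+ j.
Proof.
elim: j => [|j IHj]; first by rewrite gbin0.
apply: (@mulfI _ j.+1%:R); first by rewrite pnatr_eq0.
by rewrite -gbin_succ IHj exprS mulrS mulrNz mulr1z; ring.
Qed.

Lemma esum_gbin_pascal (U : lmodType K) (m : int) (F : nat -> U) : eventually_zero F ->
  esum (fun i => gbin (m + 1) i *: F i)
  = esum (fun i => gbin m i *: F i) + esum (fun i => gbin m i *: F i.+1).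
Proof.
move=> eF; have eFS := eventually_zeroS eF.
rewrite (esum_recl (eventually_zeroZ _ eF)).
rewrite [esum (fun i => gbin m i *: F i)](esum_recl (eventually_zeroZ _ eF)).
rewrite /= !gbin0 !scale1r -addrA; congr (_ + _).
rewrite -esumD; first by apply: eq_esum => j; rewrite gbin_pascal scalerDl.
all: exact: eventually_zeroZ eFS.
Qed.

Lemma esum_gbin_absorb (U : lmodType K) (n : int) (F : nat -> U) : eventually_zero F ->
  esum (fun i => (i%:R * gbin n i) *: F i) = n%:~R *: esum (fun i => gbin (n - 1) i *: F i.+1).
Proof.
move=> eF; rewrite (esum_recl (eventually_zeroZ _ eF)) /= mul0r scale0r add0r.
rewrite -esumZ; last exact: eventually_zeroZ (eventually_zeroS eF).
by apply: eq_esum => j; rewrite gbin_absorb scalerA.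
Qed.

End GeneralizedBinomial.

Section Linear.
Variables (K : fieldType) (U W : lmodType K) (f : U -> W).
Hypothesis f_lin : lin f.

Lemma lin0 : f 0 = 0.
Proof.
have := f_lin 1 0 0; rewrite scaler0 add0r scale1r -{1}[f 0]addr0.
by move=> /addrI <-.
Qed.

Lemma linD x y : f (x + y) = f x + f y.
Proof. by have := f_lin 1 x y; rewrite !scale1r. Qed.

Lemma linZ c x : f (c *: x) = c *: f x.
Proof. by rewrite -[c *: x]addr0 f_lin lin0 addr0. Qed.

End Linear.

Lemma truncation_eventually_zero (K : fieldType) (U W X : lmodType K)
    (mu : U -> int -> W -> X) :
  truncation mu -> forall u w (m : int), eventually_zero (fun j => mu u (m + j%:Z) w).
Proof. by move=> tr u w m; have [N muN] := tr u w; exists `|N - m|%N => j jN; apply: muN; lia. Qed.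

Lemma eventually_not_natr (K : numFieldType) (c : K) :
  exists N, forall j k : nat, (N <= j)%N -> c != (j + k)%:R.
Proof.
have [[n ->] | c_nat] := classic (exists n : nat, c = n%:R).
  by exists n.+1 => j k nj; rewrite eqr_nat; lia.
by exists 0%N => j k _; apply/eqP => cjk; apply: c_nat; exists (j + k)%N.
Qed.

Lemma in_series_S_eventually_zero (K : numFieldType) (X : lmodType K) (S : K -> Prop)
    (f : K -> X) :
  in_series_S S f -> forall q, eventually_zero (fun j => f (q + j%:R)).
Proof.
move=> [ds [_ f_ds]] q.
(* A nonzero coefficient at q + j forces d - q - 1 = j + k for some d in ds and k >= 0. *)
have [N ds_far] : exists N, forall j k d, (N <= j)%N -> d \in ds -> d - q - 1 != (j + k)%:R.
  elim: ds {f_ds} => [|d ds [N ds_far]]; first by exists 0%N.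
  have [M d_far] := eventually_not_natr (d - q - 1).
  exists (maxn N M) => j k d'; rewrite geq_max in_cons => /andP[jN jM] /orP[/eqP -> | d'ds].
    exact: d_far.
  exact: ds_far.
exists N => j jN; apply: NNPP => fj.
have [d [k [dds Ed]]] := f_ds _ fj.
have kE : k%:R = - (q + j%:R) - 1 + d by rewrite Ed; ring.
by move/negP: (ds_far j k d jN dds); apply; apply/eqP; rewrite natrD kE; ring.
Qed.

Lemma subrACA (U : zmodType) (x1 y1 x2 y2 : U) :
  (x1 - y1) - (x2 - y2) = (x1 - x2) - (y1 - y2).
Proof. by rewrite !opprD !opprK addrACA. Qed.

Lemma subrACA3 (U : zmodType) (x1 y1 x2 y2 x3 y3 : U) :
  (x1 - y1) - (x2 - y2) - (x3 - y3) = (x1 - x2 - x3) - (y1 - y2 - y3).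
Proof. by rewrite (subrACA x1 y1 x2 y2) subrACA. Qed.

Lemma subrDACA3 (U : zmodType) (x1 y1 x2 y2 x3 y3 : U) :
  (x1 + y1) - (x2 + y2) - (x3 + y3) = (x1 - x2 - x3) + (y1 - y2 - y3).
Proof. by rewrite !opprD (addrACA x1 y1) (addrACA (x1 - x2)). Qed.

Section Signs.
Variable K : numFieldType.

Lemma sgn_addn (n : int) (j : nat) : (-1) ^ (n + j%:Z) = (-1) ^ n * (-1) ^+ j :> K.
Proof. by rewrite expfzDr // oppr_eq0 oner_eq0. Qed.

Lemma sgn_subr1 (n : int) : (-1) ^ (n - 1) = - (-1) ^ n :> K.
Proof.
have := @expfzDr K (-1) (n - 1) 1; rewrite subrK oppr_eq0 oner_eq0 => -> //.
by rewrite expr1z mulrN1 opprK.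
Qed.

Lemma sgnN1 : (-1) ^ (-1) = -1 :> K.
Proof. by have := sgn_subr1 0; rewrite sub0r expr0z. Qed.

Lemma sgn_sqr (j : nat) : (-1) ^+ j * (-1) ^+ j = 1 :> K.
Proof. by rewrite -exprMn mulrNN mulr1 expr1n. Qed.

End Signs.

Section JacobiDefect.
Variables (K : numFieldType) (V M1 M2 M3 : lmodType K).
Variables (m1 : V -> int -> M1 -> M1) (m2 : V -> int -> M2 -> M2) (m3 : V -> int -> M3 -> M3).
Variables (T1 : M1 -> M1) (Yc : M1 -> K -> M2 -> M3).
Hypothesis m3_lin : forall u n, lin (m3 u n).
Hypothesis Yc_lin_l : forall p w, lin (fun u => Yc u p w).
Hypothesis Yc_lin_r : forall u p, lin (Yc u p).
Hypothesis m1_trunc : truncation m1.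
Hypothesis m2_trunc : truncation m2.
Hypothesis Yc_trunc : forall a b q, eventually_zero (fun j => Yc a (q + j%:R) b).
Hypothesis m1_T1 : forall v n w, T1 (m1 v n w) - m1 v n (T1 w) = - n%:~R *: m1 v (n - 1) w.
Hypothesis Yc_T1 : forall a b p, Yc (T1 a) p b = - p *: Yc a (p - 1) b.

Implicit Types (v : V) (a : M1) (b : M2) (n m : int) (p : K).

(* The coefficients of z1^(-m-1) z2^(-p-1) in the three series of the Jacobi identity. *)
Definition jacobi_left v a b n m p (j : nat) : M3 :=
  ((-1) ^+ j * gbin K n j) *: m3 v (m + n - j%:Z) (Yc a (p + (j%:Z)%:~R) b).
Definition jacobi_right v a b n m p (j : nat) : M3 :=
  ((-1) ^ (n + j%:Z) * gbin K n j) *: Yc a (p + (n - j%:Z)%:~R) (m2 v (m + j%:Z) b).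
Definition jacobi_delta v a b n m p (i : nat) : M3 :=
  gbin K m i *: Yc (m1 v (n + i%:Z) a) (p + (m - i%:Z)%:~R) b.

Definition jacobi_defect v a b n m p : M3 :=
  esum (jacobi_left v a b n m p) - esum (jacobi_right v a b n m p)
  - esum (jacobi_delta v a b n m p).

Lemma eventually_zero_jacobi_left v a b n m p : eventually_zero (jacobi_left v a b n m p).
Proof.
apply: (eventually_zeroW (Yc_trunc a b p)) => j Yj.
by rewrite /jacobi_left -pmulrn Yj (lin0 (m3_lin _ _)) scaler0.
Qed.

Lemma eventually_zero_jacobi_right v a b n m p : eventually_zero (jacobi_right v a b n m p).
Proof.
apply: (eventually_zeroW (truncation_eventually_zero m2_trunc v b m)) => j /= mj.
by rewrite /jacobi_right mj (lin0 (Yc_lin_r _ _)) scaler0.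
Qed.

Lemma eventually_zero_jacobi_delta v a b n m p : eventually_zero (jacobi_delta v a b n m p).
Proof.
apply: (eventually_zeroW (truncation_eventually_zero m1_trunc v a n)) => j /= mj.
by rewrite /jacobi_delta mj (lin0 (Yc_lin_l _ _)) scaler0.
Qed.

Lemma jacobi_left_succ v a b n m p :
  esum (jacobi_left v a b (n + 1) m p)
  = esum (jacobi_left v a b n (m + 1) p) - esum (jacobi_left v a b n m (p + 1)).
Proof.
pose G j := (-1) ^+ j *: m3 v (m + (n + 1) - j%:Z) (Yc a (p + (j%:Z)%:~R) b).
have eG : eventually_zero G.
  apply: (eventually_zeroW (Yc_trunc a b p)) => j Yj.
  by rewrite /G -pmulrn Yj (lin0 (m3_lin _ _)) scaler0.
rewrite (@eq_esum _ _ (fun j => gbin K (n + 1) j *: G j)); last first.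
  by move=> j; rewrite /jacobi_left /G scalerA mulrC.
rewrite esum_gbin_pascal //; congr (_ + _).
  apply: eq_esum => j; rewrite /jacobi_left /G scalerA mulrC.
  by rewrite (_ : m + (n + 1) - j%:Z = m + 1 + n - j%:Z) //; lia.
rewrite -esumN; last exact: eventually_zero_jacobi_left.
apply: eq_esum => j; rewrite /jacobi_left /G scalerA exprS.
rewrite (_ : m + (n + 1) - j.+1%:Z = m + n - j%:Z); last lia.
rewrite (_ : p + (j.+1%:Z)%:~R = p + 1 + (j%:Z)%:~R); last by rewrite -!pmulrn mulrS; ring.
by rewrite -scaleNr; congr (_ *: _); ring.
Qed.

Lemma jacobi_right_succ v a b n m p :
  esum (jacobi_right v a b (n + 1) m p)
  = esum (jacobi_right v a b n (m + 1) p) - esum (jacobi_right v a b n m (p + 1)).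
Proof.
pose G j := (-1) ^ (n + 1 + j%:Z) *: Yc a (p + (n + 1 - j%:Z)%:~R) (m2 v (m + j%:Z) b).
have eG : eventually_zero G.
  apply: (eventually_zeroW (truncation_eventually_zero m2_trunc v b m)) => j /= mj.
  by rewrite /G mj (lin0 (Yc_lin_r _ _)) scaler0.
rewrite (@eq_esum _ _ (fun j => gbin K (n + 1) j *: G j)); last first.
  by move=> j; rewrite /jacobi_right /G scalerA mulrC.
rewrite esum_gbin_pascal // addrC; congr (_ + _).
  apply: eq_esum => j; rewrite /jacobi_right /G scalerA mulrC.
  rewrite (_ : n + 1 + j.+1%:Z = n + j.+2%:Z); last lia.
  rewrite (_ : n + 1 - j.+1%:Z = n - j%:Z); last lia.
  rewrite (_ : m + j.+1%:Z = m + 1 + j%:Z); last lia.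
  by rewrite !sgn_addn !exprS; congr (_ *: _); ring.
rewrite -esumN; last exact: eventually_zero_jacobi_right.
apply: eq_esum => j; rewrite /jacobi_right /G scalerA.
rewrite (_ : n + 1 + j%:Z = n + j.+1%:Z); last lia.
rewrite !sgn_addn exprS.
rewrite (_ : p + (n + 1 - j%:Z)%:~R = p + 1 + (n - j%:Z)%:~R); last by ring.
by rewrite -scaleNr; congr (_ *: _); ring.
Qed.

Lemma jacobi_delta_succ v a b n m p :
  esum (jacobi_delta v a b n (m + 1) p)
  = esum (jacobi_delta v a b n m (p + 1)) + esum (jacobi_delta v a b (n + 1) m p).
Proof.
pose G j := Yc (m1 v (n + j%:Z) a) (p + (m + 1 - j%:Z)%:~R) b.
have eG : eventually_zero G.
  apply: (eventually_zeroW (truncation_eventually_zero m1_trunc v a n)) => j /= mj.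
  by rewrite /G mj (lin0 (Yc_lin_l _ _)).
rewrite (@eq_esum _ _ (fun j => gbin K (m + 1) j *: G j)) //.
rewrite esum_gbin_pascal //; congr (_ + _); apply: eq_esum => j; rewrite /jacobi_delta /G.
  by rewrite (_ : p + (m + 1 - j%:Z)%:~R = p + 1 + (m - j%:Z)%:~R) //; ring.
rewrite (_ : n + j.+1%:Z = n + 1 + j%:Z); last lia.
by rewrite (_ : p + (m + 1 - j.+1%:Z)%:~R = p + (m - j%:Z)%:~R) //; ring.
Qed.

Lemma jacobi_defect_succ v a b n m p :
  jacobi_defect v a b (n + 1) m p
  = jacobi_defect v a b n (m + 1) p - jacobi_defect v a b n m (p + 1).
Proof.
have delta_succ : esum (jacobi_delta v a b (n + 1) m p)
    = esum (jacobi_delta v a b n (m + 1) p) - esum (jacobi_delta v a b n m (p + 1)).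
  by rewrite jacobi_delta_succ addrAC subrr add0r.
by rewrite /jacobi_defect jacobi_left_succ jacobi_right_succ delta_succ subrACA3.
Qed.

Lemma jacobi_left_pred v a b n m p :
  n%:~R *: esum (jacobi_left v a b (n - 1) m p)
  = p *: esum (jacobi_left v a b n m (p - 1)) + esum (jacobi_left v (T1 a) b n m p).
Proof.
pose G j := (-1) ^+ j *: m3 v (m + n - j%:Z) (Yc a (p - 1 + (j%:Z)%:~R) b).
have eG : eventually_zero G.
  apply: (eventually_zeroW (Yc_trunc a b (p - 1))) => j Yj.
  by rewrite /G -pmulrn Yj (lin0 (m3_lin _ _)) scaler0.
have eG' := eventually_zeroZ (fun j => j%:R * gbin K n j) eG.
have eGS := eventually_zeroZ (fun j => gbin K (n - 1) j) (eventually_zeroS eG).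
have eL := eventually_zero_jacobi_left v a b n m (p - 1).
have eLT := eventually_zero_jacobi_left v (T1 a) b n m p.
rewrite esumDZ //.
transitivity (esum (fun j => - ((j%:R * gbin K n j) *: G j))); last first.
  apply: eq_esum => j; rewrite /jacobi_left /G Yc_T1 (linZ (m3_lin _ _)).
  rewrite (_ : p + (j%:Z)%:~R - 1 = p - 1 + (j%:Z)%:~R); last by ring.
  rewrite !scalerA -scalerDl -scaleNr -pmulrn; congr (_ *: _); ring.
rewrite esumN // esum_gbin_absorb // -scalerN -esumN //.
congr (_ *: _); apply: eq_esum => j; rewrite /jacobi_left /G scalerA exprS.
rewrite (_ : m + n - j.+1%:Z = m + (n - 1) - j%:Z); last lia.
rewrite (_ : p - 1 + (j.+1%:Z)%:~R = p + (j%:Z)%:~R); last by rewrite -!pmulrn mulrS; ring.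
by rewrite -scaleNr; congr (_ *: _); ring.
Qed.

Lemma jacobi_right_pred v a b n m p :
  n%:~R *: esum (jacobi_right v a b (n - 1) m p)
  = p *: esum (jacobi_right v a b n m (p - 1)) + esum (jacobi_right v (T1 a) b n m p).
Proof.
have eR := eventually_zero_jacobi_right v a b (n - 1) m p.
have eR' := eventually_zero_jacobi_right v a b n m (p - 1).
have eRT := eventually_zero_jacobi_right v (T1 a) b n m p.
rewrite esumDZ // -esumZ //.
apply: eq_esum => j; rewrite /jacobi_right Yc_T1.
rewrite (_ : p - 1 + (n - j%:Z)%:~R = p + (n - 1 - j%:Z)%:~R); last by ring.
rewrite (_ : p + (n - j%:Z)%:~R - 1 = p + (n - 1 - j%:Z)%:~R); last by ring.
rewrite !scalerA -scalerDl; congr (_ *: _).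
rewrite (_ : n - 1 + j%:Z = n + j%:Z - 1); last lia.
rewrite sgn_subr1 -[n%:~R * _]mulrCA -gbin_subn; ring.
Qed.

Lemma m1_T1r v k w : m1 v k (T1 w) = T1 (m1 v k w) + k%:~R *: m1 v (k - 1) w.
Proof.
have := m1_T1 v k w => /(congr1 (fun x => - x + T1 (m1 v k w))).
by rewrite opprB subrK scaleNr opprK addrC.
Qed.

Lemma jacobi_delta_pred v a b n m p :
  n%:~R *: esum (jacobi_delta v a b (n - 1) m p)
  = p *: esum (jacobi_delta v a b n m (p - 1)) + esum (jacobi_delta v (T1 a) b n m p).
Proof.
pose G i := Yc (m1 v (n - 1 + i%:Z) a) (p + (m - i%:Z)%:~R) b.
have eG : eventually_zero G.
  apply: (eventually_zeroW (truncation_eventually_zero m1_trunc v a (n - 1))) => j /= mj.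
  by rewrite /G mj (lin0 (Yc_lin_l _ _)).
have eG' := eventually_zeroZ (fun i => (n + i%:Z)%:~R * gbin K m i) eG.
have eG'' := eventually_zeroZ (fun i => i%:R * gbin K m i) eG.
have eGS := eventually_zeroZ (fun i => i.+1%:R * gbin K m i.+1) (eventually_zeroS eG).
have eD := eventually_zero_jacobi_delta v a b (n - 1) m p.
have eD' := eventually_zero_jacobi_delta v a b n m (p - 1).
have eDT := eventually_zero_jacobi_delta v (T1 a) b n m p.
rewrite esumDZ //.
transitivity (esum (fun i => ((n + i%:Z)%:~R * gbin K m i) *: G i
                            - (i.+1%:R * gbin K m i.+1) *: G i.+1)); last first.
  apply: eq_esum => i; rewrite /jacobi_delta /G m1_T1r (linD (Yc_lin_l _ _)).
  rewrite (linZ (Yc_lin_l _ _)) Yc_T1.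
  rewrite (_ : n - 1 + i.+1%:Z = n + i%:Z); last lia.
  rewrite (_ : n + i%:Z - 1 = n - 1 + i%:Z); last lia.
  have -> : p - 1 + (m - i%:Z)%:~R = p + (m - i.+1%:Z)%:~R.
    by rewrite !intrD !intrN -!pmulrn mulrS; ring.
  have -> : p + (m - i%:Z)%:~R - 1 = p + (m - i.+1%:Z)%:~R.
    by rewrite !intrD !intrN -!pmulrn mulrS; ring.
  rewrite -gbin_succ !scalerA scalerDr !scalerA addrA -scalerDl addrC.
  by congr (_ + _); [rewrite mulrC | rewrite -scaleNr; congr (_ *: _); ring].
have shift : esum (fun i => (i.+1%:R * gbin K m i.+1) *: G i.+1)
           = esum (fun i => (i%:R * gbin K m i) *: G i).
  by rewrite [RHS](esum_recl eG'') /= mul0r scale0r add0r.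
rewrite esumB // shift -esumB // -esumZ //.
apply: eq_esum => i; rewrite /jacobi_delta /G -scalerBl scalerA; congr (_ *: _).
by rewrite intrD -pmulrn; ring.
Qed.

Lemma jacobi_defect_pred v a b n m p :
  n%:~R *: jacobi_defect v a b (n - 1) m p
  = p *: jacobi_defect v a b n m (p - 1) + jacobi_defect v (T1 a) b n m p.
Proof.
rewrite /jacobi_defect !scalerBr jacobi_left_pred jacobi_right_pred jacobi_delta_pred.
exact: subrDACA3.
Qed.

Definition jacobi_at n := forall v a b m p, jacobi_defect v a b n m p = 0.

Lemma jacobi_at_succ n : jacobi_at n -> jacobi_at (n + 1).
Proof. by move=> Jn v a b m p; rewrite jacobi_defect_succ !Jn subrr. Qed.

Lemma jacobi_at_pred n : n != 0 -> jacobi_at n -> jacobi_at (n - 1).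
Proof.
move=> n0 Jn v a b m p; have := jacobi_defect_pred v a b n m p.
by rewrite !Jn scaler0 addr0 => /eqP; rewrite scaler_eq0 intr_eq0 (negbTE n0) => /eqP.
Qed.

(* At n = -1 the first recursion is a transport along m + p, since D(0, m, p) = 0. *)
Lemma jacobi_atN1 : jacobi_at 0 ->
  (forall v a b p, jacobi_defect v a b (-1) 0 p = 0) -> jacobi_at (-1).
Proof.
move=> J0 JN10 v a b m p.
have shift m' p' : jacobi_defect v a b (-1) (m' + 1) p' = jacobi_defect v a b (-1) m' (p' + 1).
  by apply/eqP; rewrite -subr_eq0 -jacobi_defect_succ J0.
elim/int_rec: m p => [|k IHk|k IHk] p; first exact: JN10.
  by rewrite -addn1 PoszD shift IHk.
have -> : - (k.+1%:Z) = - k%:Z - 1 by rewrite -addn1 PoszD opprD.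
by rewrite -(subrK 1 p) -shift subrK IHk.
Qed.

Lemma jacobi_at_all : jacobi_at 0 -> jacobi_at (-1) -> forall n, jacobi_at n.
Proof.
move=> J0 JN1; elim/int_rec => [|k Jk|[|k] Jk] //.
  by rewrite -addn1 PoszD; exact: jacobi_at_succ.
have -> : - (k.+2%:Z) = - k.+1%:Z - 1 by rewrite -addn1 PoszD opprD.
by apply: jacobi_at_pred => //; rewrite oppr_eq0.
Qed.

Lemma jacobiP : jacobi (fun k : int => k%:~R) m1 m2 m3 Yc <-> forall n, jacobi_at n.
Proof.
have eL := eventually_zero_jacobi_left; have eR := eventually_zero_jacobi_right.
have eD := eventually_zero_jacobi_delta.
split => [J n v a b m p | J v a b n m p].
  have [s1 [s2 [s3 [h1 [h2 [h3 e]]]]]] := J v a b n m p.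
  rewrite /jacobi_defect.
  move/(series_sum_esum _ (eL v a b n m p)): h1 => <-.
  move/(series_sum_esum _ (eR v a b n m p)): h2 => <-.
  move/(series_sum_esum _ (eD v a b n m p)): h3 => <-.
  by rewrite e subrr.
exists (esum (jacobi_left v a b n m p)), (esum (jacobi_right v a b n m p)).
exists (esum (jacobi_delta v a b n m p)).
split; first exact/(series_sum_esum _ (eL v a b n m p)).
split; first exact/(series_sum_esum _ (eR v a b n m p)).
split; first exact/(series_sum_esum _ (eD v a b n m p)).
by apply/eqP; rewrite -subr_eq0 -/(jacobi_defect _ _ _ _ _ _) J.
Qed.

Definition commutator_formula := forall v a b m p,
  exists s, series_sum (fun i => gbin K m i *: Yc (m1 v i%:Z a) (p + (m - i%:Z)%:~R) b) s
         /\ m3 v m (Yc a p b) - Yc a p (m2 v m b) = s.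

Definition normal_ordered_product_formula := forall v a b p,
  exists s1 s2, series_sum (fun k => m3 v (-1 - k%:Z) (Yc a (p + k%:R) b)) s1
             /\ series_sum (fun k => Yc a (p - k%:R - 1) (m2 v k%:Z b)) s2
             /\ Yc (m1 v (-1) a) p b = s1 + s2.

Lemma esum_jacobi_left0 v a b m p : esum (jacobi_left v a b 0 m p) = m3 v m (Yc a p b).
Proof.
rewrite esum_first; last by move=> j; rewrite /jacobi_left gbin_0S mulr0 scale0r.
rewrite /jacobi_left gbin0 expr0 mul1r scale1r.
by congr (m3 v _ (Yc a _ b)); [lia | ring].
Qed.

Lemma esum_jacobi_right0 v a b m p : esum (jacobi_right v a b 0 m p) = Yc a p (m2 v m b).
Proof.
rewrite esum_first; last by move=> j; rewrite /jacobi_right gbin_0S mulr0 scale0r.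
rewrite /jacobi_right gbin0 mulr1 expr0z scale1r.
by congr (Yc a _ (m2 v _ b)); [ring | lia].
Qed.

Lemma jacobi_at0P : jacobi_at 0 <-> commutator_formula.
Proof.
have eD v a b m p := eventually_zero_jacobi_delta v a b 0 m p.
split => J v a b m p.
  exists (esum (jacobi_delta v a b 0 m p)); split; first exact/(series_sum_esum _ (eD v a b m p)).
  by apply/eqP; rewrite -esum_jacobi_left0 -esum_jacobi_right0 -subr_eq0 -/(jacobi_defect _ _ _ _ _ _) J.
have [s [/(series_sum_esum _ (eD v a b m p)) s_eq e]] := J v a b m p.
by rewrite /jacobi_defect esum_jacobi_left0 esum_jacobi_right0 e s_eq subrr.
Qed.

Lemma esum_jacobi_leftN1 v a b p :
  esum (jacobi_left v a b (-1) 0 p) = esum (fun k => m3 v (-1 - k%:Z) (Yc a (p + k%:R) b)).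
Proof.
apply: eq_esum => j; rewrite /jacobi_left gbinN1 sgn_sqr scale1r -pmulrn.
by congr (m3 v _ _); lia.
Qed.

Lemma esum_jacobi_rightN1 v a b p :
  esum (jacobi_right v a b (-1) 0 p) = - esum (fun k => Yc a (p - k%:R - 1) (m2 v k%:Z b)).
Proof.
rewrite -esumN; last first.
  apply: (eventually_zeroW (truncation_eventually_zero m2_trunc v b 0)) => j /= mj.
  by rewrite mj (lin0 (Yc_lin_r _ _)).
apply: eq_esum => j.
rewrite /jacobi_right sgn_addn gbinN1 sgnN1 -mulrA sgn_sqr mulr1 scaleN1r.
by congr (- Yc a _ _); ring.
Qed.

Lemma esum_jacobi_deltaN1 v a b p : esum (jacobi_delta v a b (-1) 0 p) = Yc (m1 v (-1) a) p b.
Proof.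
rewrite esum_first; last by move=> j; rewrite /jacobi_delta gbin_0S scale0r.
by rewrite /jacobi_delta gbin0 scale1r addr0 subr0 addr0.
Qed.

Lemma jacobi_atN1_0P :
  (forall v a b p, jacobi_defect v a b (-1) 0 p = 0) <-> normal_ordered_product_formula.
Proof.
have eL v a b p : eventually_zero (fun k => m3 v (-1 - k%:Z) (Yc a (p + k%:R) b)).
  apply: (eventually_zeroW (Yc_trunc a b p)) => j Yj.
  by rewrite Yj (lin0 (m3_lin _ _)).
have eR v a b p : eventually_zero (fun k => Yc a (p - k%:R - 1) (m2 v k%:Z b)).
  apply: (eventually_zeroW (truncation_eventually_zero m2_trunc v b 0)) => j /= mj.
  by rewrite mj (lin0 (Yc_lin_r _ _)).
split => J v a b p.
  exists (esum (fun k => m3 v (-1 - k%:Z) (Yc a (p + k%:R) b))).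
  exists (esum (fun k => Yc a (p - k%:R - 1) (m2 v k%:Z b))).
  split; first exact/(series_sum_esum _ (eL v a b p)).
  split; first exact/(series_sum_esum _ (eR v a b p)).
  have := J v a b p; rewrite /jacobi_defect esum_jacobi_leftN1 esum_jacobi_rightN1.
  by rewrite esum_jacobi_deltaN1 opprK => /eqP; rewrite subr_eq0 => /eqP.
have [s1 [s2 [/(series_sum_esum _ (eL v a b p)) -> [/(series_sum_esum _ (eR v a b p)) -> e]]]] :=
  J v a b p.
by rewrite /jacobi_defect esum_jacobi_leftN1 esum_jacobi_rightN1 esum_jacobi_deltaN1 e opprK subrr.
Qed.

Lemma jacobi_iff_formulas : jacobi (fun k : int => k%:~R) m1 m2 m3 Yc
  <-> normal_ordered_product_formula /\ commutator_formula.
Proof.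
rewrite jacobiP -jacobi_at0P -jacobi_atN1_0P.
split => [J | [JN1 J0]]; first by split=> *; apply: J.
exact: jacobi_at_all J0 (jacobi_atN1 J0 JN1).
Qed.

End JacobiDefect.

Unset Implicit Arguments.

Theorem proposition3p7 (R : realType)
    (V M1 M2 M3 : lmodType R[i])
    (vac : V) (T : V -> V) (md : V -> int -> V -> V)
    (T1 : M1 -> M1) (m1 : V -> int -> M1 -> M1)
    (T2 : M2 -> M2) (m2 : V -> int -> M2 -> M2)
    (T3 : M3 -> M3) (m3 : V -> int -> M3 -> M3)
    (S : R[i] -> Prop) (Yc : M1 -> R[i] -> M2 -> M3) :
  is_vertex_algebra vac T md ->
  is_module vac md T1 m1 -> is_module vac md T2 m2 -> is_module vac md T3 m3 ->
  exponent_set S ->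
  (* Yc : M1 -> Hom(M2, M3[[z]] z^{-S}) linear;  Yc a p b = a_(p) b *)
  bilin_modes Yc ->
  (forall a b, in_series_S S (fun p => Yc a p b)) ->
  (* T Y(a,z) - Y(a,z) T = Y(Ta,z) *)
  (forall a b p, T3 (Yc a p b) - Yc a p (T2 b) = Yc (T1 a) p b) ->
  (* Y(Ta,z) = d/dz Y(a,z) *)
  (forall a b p, Yc (T1 a) p b = - p *: Yc a (p - 1) b) ->
  (jacobi (fun k : int => k%:~R) m1 m2 m3 Yc <->
   ((forall (v : V) (a : M1) (b : M2) (p : R[i]),
       exists s1 s2,
         series_sum (fun k => m3 v (-1 - k%:Z) (Yc a (p + k%:R) b)) s1
      /\ series_sum (fun k => Yc a (p - k%:R - 1) (m2 v k%:Z b)) s2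
      /\ Yc (m1 v (-1) a) p b = s1 + s2)
    /\
    (forall (v : V) (a : M1) (b : M2) (m : int) (p : R[i]),
       exists s,
         series_sum (fun i => gbin R[i] m i *: Yc (m1 v i%:Z a) (p + (m - i%:Z)%:~R) b) s
      /\ m3 v m (Yc a p b) - Yc a p (m2 v m b) = s))).
Proof.
move=> _ [_ [_ [m1_trunc [_ [m1_T1 _]]]]] [_ [_ [m2_trunc _]]] [_ [[_ m3_lin] _]] _
  [Yc_lin_l Yc_lin_r] Yc_S _ Yc_T1.
apply: (jacobi_iff_formulas m3_lin Yc_lin_l Yc_lin_r m1_trunc m2_trunc _ m1_T1 Yc_T1).
by move=> a b; apply: in_series_S_eventually_zero (Yc_S a b).
Qed.
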